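(* ($\mathrm{ZFCU}_R$) Let $\mathcal{I}$ be an $\mathcal{A}$-ideal and let $U^{\mathcal{I}}=\{x: ker(x)\in\mathcal{I}\}$. Then $U^{\mathcal{I}}\models\mathrm{ZFCU}_R+$ ''$\mathcal{A}$ is a proper class''.
   Context: $\mathrm{ZFCU}_R$ is ZFC with urelements (language $\{\in,\mathcal{A}\}$, $\mathcal{A}$ the urelement predicate), formulated with Replacement rather than Collection, with AC. $ker(x)$ is the set of urelements in the transitive closure of $\{x\}$ (so $ker(a)=\{a\}$ for a urelement $a$). An $\mathcal{A}$-ideal is a (definable) class $\mathcal{I}$ of sets of urelements such that: if the class $\mathcal{A}$ of all urelements is a set then $\mathcal{A}\notin\mathcal{I}$; $\mathcal{I}$ is closed under finite unions and subsets; and $\{a\}\in\mathcal{I}$ for every urelement $a$. ''$\mathcal{A}$ is a proper class'' means no set contains exactly the urelements. *)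

(* A "class structure" is (M, D, mem, ur): a carrier
   type M, a domain predicate D (the class over which quantifiers range),
   the membership relation mem and the urelement predicate ur. *)

(* First-order formulas in the language {∈, A} (with equality), de Bruijn
   variables: FAll/FEx bind variable 0 and shift the others. *)
Inductive form : Type :=
| FMem : nat -> nat -> form
| FUr  : nat -> form
| FEq  : nat -> nat -> form
| FBot : form
| FImp : form -> form -> form
| FAnd : form -> form -> form
| FOr  : form -> form -> form
| FAll : form -> form
| FEx  : form -> form.

Definition scons {M : Type} (x : M) (e : nat -> M) : nat -> M :=
  fun n => match n with 0 => x | S n => e n end.

Section Semantics.
Variables (M : Type) (D : M -> Prop) (mem : M -> M -> Prop) (ur : M -> Prop).

Fixpoint sat (e : nat -> M) (p : form) : Prop :=
  match p with
  | FMem i j => mem (e i) (e j)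
  | FUr i => ur (e i)
  | FEq i j => e i = e j
  | FBot => False
  | FImp p q => sat e p -> sat e q
  | FAnd p q => sat e p /\ sat e q
  | FOr p q => sat e p \/ sat e q
  | FAll p => forall x, D x -> sat (scons x e) p
  | FEx p => exists x, D x /\ sat (scons x e) p
  end.

Definition isset (x : M) : Prop := ~ ur x.

Definition env_in (e : nat -> M) : Prop := forall n, D (e n).

(* The axioms of ZFCU_R (ZFC with urelements, Replacement instead of
   Collection, with AC), relativized to D.  The finitely many non-schematic
   axioms are written out as what their satisfaction unfolds to; the two
   schemas quantify over all formulas and all parameter assignments in D. *)
Definition ax_urelements : Prop :=
  forall a, D a -> ur a -> forall z, D z -> ~ mem z a.

Definition ax_extensionality : Prop :=
  forall x y, D x -> D y -> isset x -> isset y ->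
    (forall z, D z -> (mem z x <-> mem z y)) -> x = y.

Definition ax_foundation : Prop :=
  forall x, D x -> (exists y, D y /\ mem y x) ->
    exists y, D y /\ mem y x /\ (forall z, D z -> mem z y -> ~ mem z x).

Definition ax_pairing : Prop :=
  forall x y, D x -> D y -> exists p, D p /\ isset p /\
    (forall z, D z -> (mem z p <-> z = x \/ z = y)).

Definition ax_union : Prop :=
  forall x, D x -> exists u, D u /\ isset u /\
    (forall z, D z -> (mem z u <-> exists y, D y /\ mem y x /\ mem z y)).

Definition ax_powerset : Prop :=
  forall x, D x -> exists p, D p /\ isset p /\
    (forall y, D y -> (mem y p <-> (isset y /\ forall z, D z -> mem z y -> mem z x))).

Definition ax_infinity : Prop :=
  exists w, D w /\ isset w /\
    (exists o, D o /\ isset o /\ (forall z, D z -> ~ mem z o) /\ mem o w) /\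
    (forall x, D x -> mem x w ->
       exists s, D s /\ mem s w /\ isset s /\
         (forall z, D z -> (mem z s <-> mem z x \/ z = x))).

Definition ax_separation : Prop :=
  forall (phi : form) (e : nat -> M), env_in e ->
  forall x, D x -> exists y, D y /\ isset y /\
    (forall z, D z -> (mem z y <-> mem z x /\ sat (scons z e) phi)).

(* Replacement: for phi(v, u, params) (v = var 0, u = var 1), if phi is
   functional on x then the image of x exists. *)
Definition ax_replacement : Prop :=
  forall (phi : form) (e : nat -> M), env_in e ->
  forall x, D x ->
    (forall u, D u -> mem u x ->
       exists v, D v /\ sat (scons v (scons u e)) phi /\
         (forall v', D v' -> sat (scons v' (scons u e)) phi -> v' = v)) ->
    exists y, D y /\ isset y /\
      (forall v, D v -> (mem v y <->
         exists u, D u /\ mem u x /\ sat (scons v (scons u e)) phi)).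

Definition ax_choice : Prop :=
  forall x, D x ->
    (forall y, D y -> mem y x -> isset y /\ exists z, D z /\ mem z y) ->
    (forall y y', D y -> D y' -> mem y x -> mem y' x -> y <> y' ->
       forall z, D z -> mem z y -> ~ mem z y') ->
    exists s, D s /\ isset s /\
      (forall y, D y -> mem y x ->
         exists c, D c /\ mem c y /\ mem c s /\
           (forall c', D c' -> mem c' y -> mem c' s -> c' = c)).

Definition ZFCU_R : Prop :=
  ax_urelements /\ ax_extensionality /\ ax_foundation /\ ax_pairing /\
  ax_union /\ ax_powerset /\ ax_infinity /\ ax_separation /\
  ax_replacement /\ ax_choice.

Definition A_proper_class : Prop :=
  ~ exists s, D s /\ isset s /\ (forall z, D z -> (mem z s <-> ur z)).

End Semantics.

(* Notions inside the ambient universe (M, mem, ur), where every object exists. *)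
Section Ambient.
Variables (M : Type) (mem : M -> M -> Prop) (ur : M -> Prop).

Definition transitive (t : M) : Prop :=
  ~ ur t /\ forall y z, mem y t -> mem z y -> mem z t.

Definition in_TC_singleton (a x : M) : Prop :=
  forall t, transitive t -> mem x t -> mem a t.

Definition is_ker (x k : M) : Prop :=
  ~ ur k /\ forall a, mem a k <-> (ur a /\ in_TC_singleton a x).

Definition is_A_ideal (I : M -> Prop) : Prop :=
  (forall x, I x -> ~ ur x /\ forall z, mem z x -> ur z) /\
  (forall s, ~ ur s -> (forall z, mem z s <-> ur z) -> ~ I s) /\
  (forall o, ~ ur o -> (forall z, ~ mem z o) -> I o) /\
  (forall x y u, I x -> I y -> ~ ur u ->
     (forall z, mem z u <-> mem z x \/ mem z y) -> I u) /\
  (forall x y, I x -> ~ ur y -> (forall z, mem z y -> mem z x) -> I y) /\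
  (forall a s, ur a -> ~ ur s -> (forall z, mem z s <-> z = a) -> I s).

Definition U_ideal (I : M -> Prop) (x : M) : Prop :=
  exists k, is_ker x k /\ I k.

End Ambient.

Definition defined_class {M : Type} (mem : M -> M -> Prop) (ur : M -> Prop)
  (phi : form) (e : nat -> M) : M -> Prop :=
  fun k => sat M (fun _ => True) mem ur (scons k e) phi.

From Pilot Require Import Defs.
From Stdlib Require Import Classical ClassicalEpsilon FunctionalExtensionality Lia.

(* Because an ideal is closed under subsets and finite unions, U^I is transitive, contains
   every urelement, and contains the sets produced by pairing, union, power set, choice and
   the pure omega; Separation holds because satisfaction relativized to U^I is definable in
   the ambient universe.  For Replacement the image exists in the ambient universe, and the
   kernel of each of its elements v lies in the kernel K of the domain and the parameters:
   otherwise swap an urelement a of ker(v) outside K with an urelement c outside K and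
   ker(v), which exists because the class of all urelements is not in the ideal.  The induced
   automorphism fixes the parameters, hence the unique v, yet moves a out of ker(v).  Without
   Collection this automorphism is obtained by recursion on membership, as the union of
   set-sized graphs on transitive sets.  Finally no set of U^I contains all urelements, since
   its kernel would be the set of all urelements, which the ideal excludes. *)

(** * Syntax and definability *)

Definition up_ren (r : nat -> nat) : nat -> nat :=
  fun n => match n with 0 => 0 | S n => S (r n) end.

Fixpoint rename (r : nat -> nat) (p : form) : form :=
  match p with
  | FMem i j => FMem (r i) (r j)
  | FUr i => FUr (r i)
  | FEq i j => FEq (r i) (r j)
  | FBot => FBot
  | FImp p q => FImp (rename r p) (rename r q)
  | FAnd p q => FAnd (rename r p) (rename r q)
  | FOr p q => FOr (rename r p) (rename r q)
  | FAll p => FAll (rename (up_ren r) p)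
  | FEx p => FEx (rename (up_ren r) p)
  end.

Fixpoint fv_bound (p : form) : nat :=
  match p with
  | FMem i j | FEq i j => max (S i) (S j)
  | FUr i => S i
  | FBot => 0
  | FImp p q | FAnd p q | FOr p q => max (fv_bound p) (fv_bound q)
  | FAll p | FEx p => pred (fv_bound p)
  end.

Fixpoint interleave {M : Type} (e p : nat -> M) (n : nat) : M :=
  match n with
  | 0 => e 0
  | S 0 => p 0
  | S (S n) => interleave (fun k => e (S k)) (fun k => p (S k)) n
  end.

Lemma interleave_even {M : Type} m : forall e p : nat -> M, interleave e p (2 * m) = e m.
Proof.
  induction m; intros e p; [reflexivity |].
  replace (2 * S m) with (S (S (2 * m))) by lia; apply IHm.
Qed.

Lemma interleave_odd {M : Type} m : forall e p : nat -> M, interleave e p (S (2 * m)) = p m.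
Proof.
  induction m; intros e p; [reflexivity |].
  replace (S (2 * S m)) with (S (S (S (2 * m)))) by lia; apply IHm.
Qed.

Section Syntax.
Variables (M : Type) (D : M -> Prop) (mem : M -> M -> Prop) (ur : M -> Prop).

Lemma scons_map {N : Type} (f : M -> N) x (e : nat -> M) :
  (fun n => f (scons x e n)) = scons (f x) (fun n => f (e n)).
Proof. extensionality n; destruct n; reflexivity. Qed.

Lemma scons_up_ren (x : M) (e : nat -> M) r :
  (fun n => scons x e (up_ren r n)) = scons x (fun n => e (r n)).
Proof. extensionality n; destruct n; reflexivity. Qed.

Lemma sat_rename p : forall r e,
  sat M D mem ur e (rename r p) <-> sat M D mem ur (fun n => e (r n)) p.
Proof.
  induction p; intros r e; simpl; try tauto.
  - rewrite IHp1, IHp2; tauto.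
  - rewrite IHp1, IHp2; tauto.
  - rewrite IHp1, IHp2; tauto.
  - split; intros H x Hx; specialize (H x Hx); rewrite IHp, scons_up_ren in *; auto.
  - split; intros [x [Hx H]]; exists x; split; auto; rewrite IHp, scons_up_ren in *; auto.
Qed.

Lemma sat_fv_ext p : forall e e',
  (forall n, n < fv_bound p -> e n = e' n) ->
  (sat M D mem ur e p <-> sat M D mem ur e' p).
Proof.
  induction p; intros e e' H; simpl in *.
  - rewrite (H n), (H n0) by lia; tauto.
  - rewrite (H n) by lia; tauto.
  - rewrite (H n), (H n0) by lia; tauto.
  - tauto.
  - rewrite (IHp1 e e'), (IHp2 e e') by (intros; apply H; lia); tauto.
  - rewrite (IHp1 e e'), (IHp2 e e') by (intros; apply H; lia); tauto.
  - rewrite (IHp1 e e'), (IHp2 e e') by (intros; apply H; lia); tauto.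
  - assert (Hs : forall x n, n < fv_bound p -> scons x e n = scons x e' n)
      by (intros x [|n] Hn; simpl; auto; apply H; lia).
    split; intros H1 x Hx; specialize (H1 x Hx);
      [rewrite <- (IHp _ _ (Hs x)) | rewrite (IHp _ _ (Hs x))]; auto.
  - assert (Hs : forall x n, n < fv_bound p -> scons x e n = scons x e' n)
      by (intros x [|n] Hn; simpl; auto; apply H; lia).
    split; intros [x [Hx H1]]; exists x; split; auto;
      [rewrite <- (IHp _ _ (Hs x)) | rewrite (IHp _ _ (Hs x))]; auto.
Qed.

End Syntax.

Section Definability.
Variables (M : Type) (mem : M -> M -> Prop) (ur : M -> Prop).

Definition definable (P : (nat -> M) -> Prop) : Prop :=
  exists phi, forall e, sat M (fun _ => True) mem ur e phi <-> P e.

Lemma definable_ext P Q : definable P -> (forall e, P e <-> Q e) -> definable Q.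
Proof. intros [phi H] HPQ; exists phi; intro e; rewrite H; auto. Qed.

Lemma definable_mem i j : definable (fun e => mem (e i) (e j)).
Proof. exists (FMem i j); reflexivity. Qed.

Lemma definable_ur i : definable (fun e => ur (e i)).
Proof. exists (FUr i); reflexivity. Qed.

Lemma definable_eq i j : definable (fun e => e i = e j).
Proof. exists (FEq i j); reflexivity. Qed.

Lemma definable_False : definable (fun _ => False).
Proof. exists FBot; reflexivity. Qed.

Lemma definable_imp P Q : definable P -> definable Q -> definable (fun e => P e -> Q e).
Proof. intros [p Hp] [q Hq]; exists (FImp p q); intro; simpl; rewrite Hp, Hq; tauto. Qed.

Lemma definable_and P Q : definable P -> definable Q -> definable (fun e => P e /\ Q e).
Proof. intros [p Hp] [q Hq]; exists (FAnd p q); intro; simpl; rewrite Hp, Hq; tauto. Qed.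

Lemma definable_or P Q : definable P -> definable Q -> definable (fun e => P e \/ Q e).
Proof. intros [p Hp] [q Hq]; exists (FOr p q); intro; simpl; rewrite Hp, Hq; tauto. Qed.

Lemma definable_iff P Q : definable P -> definable Q -> definable (fun e => P e <-> Q e).
Proof.
  intros [p Hp] [q Hq]; exists (FAnd (FImp p q) (FImp q p)); intro; simpl.
  rewrite Hp, Hq; tauto.
Qed.

Lemma definable_all P : definable P -> definable (fun e => forall x, P (scons x e)).
Proof.
  intros [p Hp]; exists (FAll p); intro; simpl.
  split; intros H x; [apply Hp, H; auto | intros _; apply Hp, H].
Qed.

Lemma definable_ex P : definable P -> definable (fun e => exists x, P (scons x e)).
Proof.
  intros [p Hp]; exists (FEx p); intro; simpl.
  split; intros [x H]; exists x; [apply Hp, H | split; [exact I | apply Hp, H]].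
Qed.

Lemma definable_sat r phi :
  definable (fun e => sat M (fun _ => True) mem ur (fun n => e (r n)) phi).
Proof. exists (rename r phi); intro; apply sat_rename. Qed.

End Definability.

Create HintDb definable.

(* A binder [forall x] / [exists x] is eliminated by moving [x] to position 0 of the
   environment, so that the body is again a predicate of the environment alone. *)
Ltac solve_definable :=
  cbv beta;
  match goal with
  | |- definable _ _ _ (fun e => forall x : ?T, @?B e x) =>
      let P := constr:(fun e' : nat -> T => B (fun n => e' (S n)) (e' 0)) in
      apply (definable_all _ _ _ P); solve_definable
  | |- definable _ _ _ (fun e => exists x : ?T, @?B e x) =>
      let P := constr:(fun e' : nat -> T => B (fun n => e' (S n)) (e' 0)) in
      apply (definable_ex _ _ _ P); solve_definable
  | |- definable _ _ _ (fun e => _ <-> _) => apply definable_iff; solve_definable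
  | |- definable _ _ _ (fun e => _ /\ _) => apply definable_and; solve_definable
  | |- definable _ _ _ (fun e => _ \/ _) => apply definable_or; solve_definable
  | |- definable _ _ _ (fun e => _ -> _) => apply definable_imp; solve_definable
  | |- definable _ _ _ (fun e => ~ _) =>
      apply definable_imp; [solve_definable | apply definable_False]
  | |- definable _ _ _ (fun e => False) => apply definable_False
  | |- definable _ ?mem _ (fun e => ?mem (e ?i) (e ?j)) => apply (definable_mem _ mem _ i j)
  | |- definable _ _ ?ur (fun e => ?ur (e ?i)) => apply (definable_ur _ _ ur i)
  | |- definable _ _ _ (fun e => e ?i = e ?j) => apply definable_eq
  | |- definable _ ?mem ?ur
         (fun e => sat _ (fun _ => True) ?mem ?ur (fun n => e (@?r n)) ?phi) =>
      apply (definable_sat _ mem ur r phi)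
  | |- _ => solve [eauto with definable]
  end.

(** * Consequences of ZFCU_R in the ambient universe *)

Section Universe.
Variables (M : Type) (mem : M -> M -> Prop) (ur : M -> Prop).
Hypothesis ZF : ZFCU_R M (fun _ => True) mem ur.

Notation definable := (definable M mem ur).
Notation transitive := (transitive M mem ur).
Notation in_TC := (in_TC_singleton M mem ur).

Lemma ur_no_mem a z : ur a -> ~ mem z a.
Proof. destruct ZF as [H _]; intros Ha; exact (H a I Ha z I). Qed.

Lemma set_ext x y : ~ ur x -> ~ ur y -> (forall z, mem z x <-> mem z y) -> x = y.
Proof. destruct ZF as [_ [H _]]; intros; apply H; auto. Qed.

Lemma mem_minimal x : (exists y, mem y x) ->
  exists y, mem y x /\ forall z, mem z y -> ~ mem z x.
Proof.
  destruct ZF as [_ [_ [H _]]]; intros [y Hy].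
  destruct (H x I (ex_intro _ y (conj I Hy))) as [y0 [_ [H1 H2]]].
  exists y0; split; [exact H1 | intros z; exact (H2 z I)].
Qed.

Lemma pair_set_ex x y : exists p, ~ ur p /\ forall z, mem z p <-> z = x \/ z = y.
Proof.
  destruct ZF as [_ [_ [_ [H _]]]]; destruct (H x y I I) as [p [_ [H1 H2]]].
  exists p; split; [exact H1 | intro z; apply H2; exact I].
Qed.

Lemma union_ex x : exists u, ~ ur u /\ forall z, mem z u <-> exists y, mem y x /\ mem z y.
Proof.
  destruct ZF as [_ [_ [_ [_ [H _]]]]]; destruct (H x I) as [u [_ [H1 H2]]].
  exists u; split; [exact H1 | intro z; rewrite H2 by exact I; firstorder].
Qed.

Lemma powerset_ex x : exists p, ~ ur p /\
  forall y, mem y p <-> ~ ur y /\ forall z, mem z y -> mem z x.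
Proof.
  destruct ZF as [_ [_ [_ [_ [_ [H _]]]]]]; destruct (H x I) as [p [_ [H1 H2]]].
  exists p; split; [exact H1 | intro y; rewrite H2 by exact I; unfold isset; firstorder].
Qed.

Lemma empty_set_ex : exists o, ~ ur o /\ forall z, ~ mem z o.
Proof.
  destruct ZF as [_ [_ [_ [_ [_ [_ [[_ [_ [_ [[o [_ [Ho [Ho' _]]]] _]]]] _]]]]]]].
  exists o; split; [exact Ho | intro z; exact (Ho' z I)].
Qed.

Lemma separation P : definable P -> forall e x,
  exists y, ~ ur y /\ forall z, mem z y <-> mem z x /\ P (scons z e).
Proof.
  intros [phi Hphi] e x; destruct ZF as [_ [_ [_ [_ [_ [_ [_ [H _]]]]]]]].
  destruct (H phi e (fun _ => I) x I) as [y [_ [H1 H2]]].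
  exists y; split; [exact H1 | intro z; rewrite H2, Hphi by exact I; tauto].
Qed.

Lemma replacement R : definable R -> forall e x,
  (forall u, mem u x -> exists v, R (scons v (scons u e)) /\
       forall v', R (scons v' (scons u e)) -> v' = v) ->
  exists y, ~ ur y /\
    forall v, mem v y <-> exists u, mem u x /\ R (scons v (scons u e)).
Proof.
  intros [phi Hphi] e x Hf; destruct ZF as [_ [_ [_ [_ [_ [_ [_ [_ [H _]]]]]]]]].
  destruct (H phi e (fun _ => I) x I) as [y [_ [H1 H2]]].
  { intros u _ Hu; destruct (Hf u Hu) as [v [Hv Huniq]].
    exists v; split; [exact I | split; [apply Hphi, Hv |]].
    intros v' _ Hv'; apply Huniq, Hphi, Hv'. }
  exists y; split; [exact H1 | intro v; rewrite H2 by exact I].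
  split; intros [u Hu]; exists u; [destruct Hu as [_ [Hu1 Hu2]] | destruct Hu as [Hu1 Hu2]];
    repeat split; auto; apply Hphi; auto.
Qed.

Lemma union2_ex x y : exists u, ~ ur u /\ forall z, mem z u <-> mem z x \/ mem z y.
Proof.
  destruct (pair_set_ex x y) as [p [_ Hp]]; destruct (union_ex p) as [u [Hu Hu']].
  exists u; split; [exact Hu | intro z; rewrite Hu'; split].
  - intros [w [Hw Hz]]; apply Hp in Hw; destruct Hw; subst; auto.
  - intros [Hz | Hz]; [exists x | exists y]; rewrite Hp; auto.
Qed.

Lemma singleton_ex x : exists s, ~ ur s /\ forall z, mem z s <-> z = x.
Proof.
  destruct (pair_set_ex x x) as [p [Hp Hp']].
  exists p; split; [exact Hp | intro; rewrite Hp'; tauto].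
Qed.

Lemma adjoin_ex x y : exists u, ~ ur u /\ forall z, mem z u <-> mem z x \/ z = y.
Proof.
  destruct (singleton_ex y) as [s [_ Hs]]; destruct (union2_ex x s) as [u [Hu Hu']].
  exists u; split; [exact Hu | intro; rewrite Hu', Hs; tauto].
Qed.

Lemma mem_ind P : definable P -> forall e t,
  (forall z, mem z t -> (forall z', mem z' z -> mem z' t -> P (scons z' e)) -> P (scons z e)) ->
  forall z, mem z t -> P (scons z e).
Proof.
  intros HP e t Hstep z Hz; apply NNPP; intro HN.
  destruct (separation _ (definable_imp _ _ _ _ _ HP (definable_False _ _ _)) e t)
    as [d [_ Hd]].
  destruct (mem_minimal d) as [z0 [Hz0 Hmin]]; [exists z; apply Hd; auto |].
  apply Hd in Hz0; destruct Hz0 as [Hz0t Hz0]; apply Hz0, Hstep; [exact Hz0t |].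
  intros z' Hz' Hz't; apply NNPP; intro HN'; apply (Hmin z' Hz'), Hd; auto.
Qed.

Definition is_pair (p x y : M) : Prop :=
  ~ ur p /\ forall z, mem z p <->
    (~ ur z /\ forall w, mem w z <-> w = x) \/ (~ ur z /\ forall w, mem w z <-> w = x \/ w = y).

Lemma pair_ex x y : exists p, is_pair p x y.
Proof.
  destruct (singleton_ex x) as [s [Hs Hs']]; destruct (pair_set_ex x y) as [d [Hd Hd']].
  destruct (pair_set_ex s d) as [p [Hp Hp']]; exists p; split; [exact Hp |].
  intro z; rewrite Hp'; split.
  - intros [-> | ->]; [left | right]; auto.
  - intros [[Hz Hz'] | [Hz Hz']]; [left | right];
      apply set_ext; auto; intro w; rewrite ?Hs', ?Hd', Hz'; tauto.
Qed.

Lemma pair_inj p x y x' y' : is_pair p x y -> is_pair p x' y' -> x = x' /\ y = y'.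
Proof.
  intros [_ H1] [_ H2].
  destruct (singleton_ex x) as [s [Hs Hs']].
  assert (Exx : x = x').
  { assert (Hsp : mem s p) by (apply H1; auto).
    apply H2 in Hsp; destruct Hsp as [[_ H] | [_ H]];
      symmetry; apply Hs', H; auto. }
  subst x'; split; [reflexivity |].
  destruct (pair_set_ex x y) as [d [Hd Hd']].
  destruct (pair_set_ex x y') as [d' [Hd2 Hd2']].
  assert (A1 : mem d p) by (apply H1; auto); apply H2 in A1.
  assert (A2 : mem d' p) by (apply H2; auto); apply H1 in A2.
  assert (Hyd : mem y d) by (apply Hd'; auto).
  assert (Hyd' : mem y' d') by (apply Hd2'; auto).
  destruct A1 as [[_ A1] | [_ A1]]; apply A1 in Hyd;
  destruct A2 as [[_ A2] | [_ A2]]; apply A2 in Hyd'; intuition congruence.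
Qed.

Lemma pair_unique p q x y : is_pair p x y -> is_pair q x y -> p = q.
Proof. intros [Hp H1] [Hq H2]; apply set_ext; auto; intro z; rewrite H1, H2; tauto. Qed.

Definition has_trans (x : M) : Prop := exists t, transitive t /\ mem x t.

Lemma in_TC_refl x : in_TC x x.
Proof. intros t _ H; exact H. Qed.

Lemma in_TC_mem x y : mem y x -> in_TC y x.
Proof. intros H t [_ Ht] Hx; exact (Ht x y Hx H). Qed.

Lemma in_TC_step x y z : in_TC y x -> mem z y -> in_TC z x.
Proof. intros H Hz t Ht Hx; pose proof (H t Ht Hx); destruct Ht as [_ Ht]; eauto. Qed.

Lemma in_TC_mem_r z u x : mem u x -> in_TC z u -> in_TC z x.
Proof. intros Hu H t Ht Hx; apply (H t Ht); destruct Ht as [_ Ht]; eauto. Qed.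

Lemma has_trans_mem x y : has_trans x -> mem y x -> has_trans y.
Proof. intros [t [Ht Hx]] Hy; exists t; split; [exact Ht | destruct Ht as [_ Ht]; eauto]. Qed.

Lemma definable_in_TC i j : definable (fun e => in_TC (e i) (e j)).
Proof. unfold in_TC_singleton, Defs.transitive; solve_definable. Qed.

#[local] Hint Resolve definable_in_TC : definable.

Lemma TC_ex x : has_trans x ->
  exists s, transitive s /\ mem x s /\ forall y, mem y s <-> in_TC y x.
Proof.
  intros [t [Ht Hx]].
  destruct (separation _ (definable_in_TC 0 1) (scons x (fun _ => x)) t) as [s [Hs Hs']].
  simpl in Hs'.
  assert (E : forall y, mem y s <-> in_TC y x) by (intro y; rewrite Hs'; split; auto; tauto).
  exists s; split; [split; [exact Hs |] | split].
  - intros y z Hy Hz; apply E; apply E in Hy; exact (in_TC_step x y z Hy Hz).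
  - apply E, in_TC_refl.
  - exact E.
Qed.

Lemma transitive_TC_sep T z s : transitive T -> ~ ur s ->
  (forall y, mem y s <-> mem y T /\ in_TC y z) -> transitive s.
Proof.
  intros [_ HT] Hs Hs'; split; [exact Hs |]; intros y u Hy Hu; apply Hs' in Hy; apply Hs'.
  destruct Hy as [HyT Hyz]; split; [exact (HT y u HyT Hu) | exact (in_TC_step z y u Hyz Hu)].
Qed.

Lemma TC_union_ex Y : (forall v, mem v Y -> has_trans v) ->
  exists W, transitive W /\ forall y, mem y W <-> exists v, mem v Y /\ in_TC y v.
Proof.
  intros HY.
  assert (DT : definable (fun e => ~ ur (e 0) /\ forall y, mem y (e 0) <-> in_TC y (e 1)))
    by solve_definable.
  destruct (replacement _ DT (fun _ => Y) Y) as [Z [_ HZ]].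
  { intros v Hv; destruct (TC_ex v (HY v Hv)) as [s [[Hs _] [_ Hs']]].
    exists s; split; [split; auto |].
    intros s' [Hs2 Hs2']; apply set_ext; auto; intro y; rewrite Hs2', Hs'; tauto. }
  simpl in HZ.
  destruct (union_ex Z) as [W [HW HW']].
  assert (HWc : forall y, mem y W <-> exists v, mem v Y /\ in_TC y v).
  { intro y; rewrite HW'; split.
    - intros [s [Hs Hys]]; apply HZ in Hs; destruct Hs as [v [Hv [_ Hs']]].
      exists v; split; [exact Hv | apply Hs', Hys].
    - intros [v [Hv Hyv]]; destruct (TC_ex v (HY v Hv)) as [s [[Hs _] [_ Hs']]].
      exists s; split; [apply HZ; exists v; auto | apply Hs', Hyv]. }
  exists W; split; [split; [exact HW |] | exact HWc].
  intros y u Hy Hu; apply HWc; apply HWc in Hy; destruct Hy as [v [Hv Hyv]].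
  exists v; split; [exact Hv | exact (in_TC_step v y u Hyv Hu)].
Qed.

Lemma transitive_union2 t1 t2 : transitive t1 -> transitive t2 ->
  exists t, transitive t /\ forall z, mem z t <-> mem z t1 \/ mem z t2.
Proof.
  intros [_ H1] [_ H2]; destruct (union2_ex t1 t2) as [t [Ht Ht']].
  exists t; split; [split; [exact Ht |] | exact Ht'].
  intros y z Hy Hz; apply Ht' in Hy; apply Ht'; destruct Hy; eauto.
Qed.

Definition is_succ (s x : M) : Prop := ~ ur s /\ forall z, mem z s <-> mem z x \/ z = x.

Definition inductive (o v : M) : Prop :=
  mem o v /\ forall x s, mem x v -> is_succ s x -> mem s v.

Lemma least_inductive_ex o w : inductive o w ->
  exists H, inductive o H /\ forall v, inductive o v -> forall n, mem n H -> mem n v.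
Proof.
  intros Hw.
  assert (DP : definable (fun e => forall v, inductive (e 1) v -> mem (e 0) v))
    by (unfold inductive, is_succ; solve_definable).
  destruct (separation _ DP (scons o (fun _ => o)) w) as [H [_ HH]]; simpl in HH.
  exists H; split; [split |].
  - apply HH; split; [apply Hw | intros v Hv; apply Hv].
  - intros x s Hx Hs; apply HH in Hx; destruct Hx as [Hxw Hx]; apply HH; split.
    + exact (proj2 Hw x s Hxw Hs).
    + intros v Hv; exact (proj2 Hv x s (Hx v Hv) Hs).
  - intros v Hv n Hn; apply HH in Hn; exact (proj2 Hn v Hv).
Qed.

(* The part of [H] consisting of sets included in [H] is again inductive. *)
Lemma least_inductive_pure o H : ~ ur o -> (forall z, ~ mem z o) -> inductive o H ->
  (forall v, inductive o v -> forall n, mem n H -> mem n v) ->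
  forall n, mem n H -> ~ ur n /\ forall m, mem m n -> mem m H.
Proof.
  intros Ho Ho' HH Hmin.
  assert (DP : definable (fun e => ~ ur (e 0) /\ forall m, mem m (e 0) -> mem m (e 1)))
    by solve_definable.
  destruct (separation _ DP (scons H (fun _ => H)) H) as [S [_ HS]]; simpl in HS.
  assert (IndS : inductive o S).
  { split.
    - apply HS; split; [apply HH | split; [exact Ho | intros m Hm; destruct (Ho' m Hm)]].
    - intros x s Hx Hs; apply HS in Hx; destruct Hx as [HxH [_ Hxm]].
      apply HS; split; [exact (proj2 HH x s HxH Hs) | split; [apply Hs |]].
      intros m Hm; apply Hs in Hm; destruct Hm as [Hm | ->]; auto. }
  intros n Hn; apply HS, (Hmin S IndS n Hn).
Qed.

Lemma pure_inductive_ex : exists H o, transitive H /\ (forall n, mem n H -> ~ ur n) /\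
  ~ ur o /\ (forall z, ~ mem z o) /\ inductive o H.
Proof.
  destruct ZF as [_ [_ [_ [_ [_ [_ [HI _]]]]]]].
  destruct HI as [w [_ [Hw [[o [_ [Ho [Ho' How]]]] Hsucc]]]].
  assert (Hw_ind : inductive o w).
  { split; [exact How |]; intros x s Hx [Hs Hs'].
    destruct (Hsucc x I Hx) as [s' [_ [Hs'w [Hs's Hs'']]]].
    replace s with s'; [exact Hs'w |].
    apply set_ext; auto; intro z; rewrite Hs'; apply Hs''; exact I. }
  destruct (least_inductive_ex o w Hw_ind) as [H [HH Hmin]].
  pose proof (least_inductive_pure o H Ho (fun z => Ho' z I) HH Hmin) as Hpure.
  exists H, o; split; [| split; [| split; [exact Ho | split; [exact (fun z => Ho' z I) |]]]].
  - split; [intro Hu; exact (ur_no_mem H o Hu (proj1 HH)) | intros y z Hy; apply Hpure, Hy].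
  - intros n Hn; apply Hpure, Hn.
  - exact HH.
Qed.

(** * Automorphisms induced by transpositions of urelements *)

Definition transposes (b c z w : M) : Prop :=
  (z = b /\ w = c) \/ (z = c /\ w = b) \/ (z <> b /\ z <> c /\ w = z).

Definition maps_to (G z w : M) : Prop := exists p, mem p G /\ is_pair p z w.

(* [G] is the graph, as a set of Kuratowski pairs, of the restriction to the transitive set
   [t] of the automorphism of the universe induced by the transposition of [b] and [c]. *)
Record swap_graph (b c G t : M) : Prop := {
  swap_graph_set : ~ ur G;
  swap_graph_pairs : forall p, mem p G -> exists z w, mem z t /\ is_pair p z w;
  swap_graph_total : forall z, mem z t -> exists w, maps_to G z w;
  swap_graph_functional : forall z w w', mem z t -> maps_to G z w -> maps_to G z w' -> w = w';
  swap_graph_ur : forall z w, mem z t -> maps_to G z w -> ur z -> transposes b c z w;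
  swap_graph_image : forall z w, mem z t -> maps_to G z w -> ~ ur z ->
    ~ ur w /\ forall v, mem v w <-> exists z', mem z' z /\ maps_to G z' v }.
Arguments swap_graph_set {b c G t}.
Arguments swap_graph_pairs {b c G t}.
Arguments swap_graph_total {b c G t}.
Arguments swap_graph_functional {b c G t}.
Arguments swap_graph_ur {b c G t}.
Arguments swap_graph_image {b c G t}.

Lemma swap_graph_iff b c G t : swap_graph b c G t <->
  ~ ur G /\
  (forall p, mem p G -> exists z w, mem z t /\ is_pair p z w) /\
  (forall z, mem z t -> exists w, maps_to G z w) /\
  (forall z w w', mem z t -> maps_to G z w -> maps_to G z w' -> w = w') /\
  (forall z w, mem z t -> maps_to G z w -> ur z -> transposes b c z w) /\
  (forall z w, mem z t -> maps_to G z w -> ~ ur z ->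
    ~ ur w /\ forall v, mem v w <-> exists z', mem z' z /\ maps_to G z' v).
Proof. split; [intros []; tauto | intros (? & ? & ? & ? & ? & ?); constructor; auto]. Qed.

Lemma definable_swap_graph i j k l :
  definable (fun e => swap_graph (e i) (e j) (e k) (e l)).
Proof.
  eapply definable_ext; cycle 1.
  { intro e; symmetry; apply swap_graph_iff. }
  unfold maps_to, is_pair, transposes; solve_definable.
Qed.

#[local] Hint Resolve definable_swap_graph : definable.

Lemma definable_maps_to i j k : definable (fun e => maps_to (e i) (e j) (e k)).
Proof. unfold maps_to, is_pair; solve_definable. Qed.

#[local] Hint Resolve definable_maps_to : definable.

Lemma maps_to_adjoin H p0 G z0 w0 : is_pair p0 z0 w0 ->
  (forall p, mem p G <-> mem p H \/ p = p0) ->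
  forall y w, maps_to G y w <-> maps_to H y w \/ (y = z0 /\ w = w0).
Proof.
  intros Hp0 HG y w; split.
  - intros [p [Hp Hpy]]; apply HG in Hp; destruct Hp as [Hp | ->].
    + left; exists p; auto.
    + right; exact (pair_inj p0 y w z0 w0 Hpy Hp0).
  - intros [[p [Hp Hpy]] | [-> ->]].
    + exists p; split; [apply HG; left |]; assumption.
    + exists p0; split; [apply HG; right |]; auto.
Qed.

Lemma converse_ex G : (forall p, mem p G -> exists z w, is_pair p z w) ->
  exists K, ~ ur K /\ (forall q, mem q K -> exists z w, maps_to G z w /\ is_pair q w z) /\
    forall z w, maps_to K w z <-> maps_to G z w.
Proof.
  intros HG.
  assert (DR : definable (fun e => exists z w, is_pair (e 1) z w /\ is_pair (e 0) w z))
    by (unfold is_pair; solve_definable).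
  destruct (replacement _ DR (fun _ => G) G) as [K [HK HK']].
  { intros p Hp; destruct (HG p Hp) as [z [w Hpz]].
    destruct (pair_ex w z) as [q Hq]; exists q; simpl; split; [eauto |].
    intros q' [z' [w' [Hp' Hq']]]; destruct (pair_inj p z w z' w' Hpz Hp') as [<- <-].
    exact (pair_unique q' q w z Hq' Hq). }
  simpl in HK'; exists K; split; [exact HK | split].
  - intros q Hq; apply HK' in Hq; destruct Hq as [p [Hp [z [w [Hpz Hqz]]]]].
    exists z, w; split; [exists p; auto | exact Hqz].
  - intros z w; split.
    + intros [q [Hq Hqw]]; apply HK' in Hq; destruct Hq as [p [Hp [z' [w' [Hpz Hqz]]]]].
      destruct (pair_inj q w z w' z' Hqw Hqz) as [<- <-]; exists p; auto.
    + intros [p [Hp Hpz]]; destruct (pair_ex w z) as [q Hq]; exists q; split; [| exact Hq].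
      apply HK'; exists p; split; [exact Hp | eauto].
Qed.

Section Swap.
Variables b c : M.
Hypotheses (ub : ur b) (uc : ur c).

Lemma transposes_functional z w w' : transposes b c z w -> transposes b c z w' -> w = w'.
Proof. unfold transposes; intuition congruence. Qed.

Lemma transposes_injective z z' w : transposes b c z w -> transposes b c z' w -> z = z'.
Proof. unfold transposes; intuition congruence. Qed.

Lemma transposes_ur z w : transposes b c z w -> ur z -> ur w.
Proof. unfold transposes; intuition congruence. Qed.

Lemma transposes_sym z w : transposes b c z w -> transposes b c w z.
Proof. unfold transposes; intuition (subst; auto). Qed.

Lemma transposes_ex z : exists w, transposes b c z w.
Proof.
  unfold transposes; destruct (classic (z = b)) as [-> | Hb]; [eauto |].
  destruct (classic (z = c)) as [-> | Hc]; eauto 7.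
Qed.

Lemma maps_to_dom G t z w : swap_graph b c G t -> maps_to G z w -> mem z t.
Proof.
  intros HG [p [Hp Hpz]]; destruct (HG.(swap_graph_pairs) p Hp) as [z' [w' [Hz' Hp']]].
  destruct (pair_inj p z w z' w' Hpz Hp') as [-> ->]; exact Hz'.
Qed.

Lemma swap_graph_agree G1 t1 G2 t2 : transitive t1 -> transitive t2 ->
  swap_graph b c G1 t1 -> swap_graph b c G2 t2 ->
  forall z w1 w2, mem z t1 -> mem z t2 -> maps_to G1 z w1 -> maps_to G2 z w2 -> w1 = w2.
Proof.
  intros [_ Ht1] [_ Ht2] HG1 HG2.
  assert (DP : definable (fun e => mem (e 0) (e 1) -> forall w1 w2,
     maps_to (e 2) (e 0) w1 -> maps_to (e 3) (e 0) w2 -> w1 = w2)) by solve_definable.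
  intros z w1 w2 Hz1 Hz2; revert Hz2 w1 w2.
  refine (mem_ind _ DP (scons t2 (scons G1 (scons G2 (fun _ => t2)))) t1 _ z Hz1).
  intros z0 Hz0 IH; simpl in IH |- *; intros Hz0' w1 w2 A1 A2.
  destruct (classic (ur z0)) as [Hu | Hs].
  - exact (transposes_functional z0 w1 w2 (HG1.(swap_graph_ur) z0 w1 Hz0 A1 Hu)
                                          (HG2.(swap_graph_ur) z0 w2 Hz0' A2 Hu)).
  - destruct (HG1.(swap_graph_image) z0 w1 Hz0 A1 Hs) as [Hw1 Hw1'].
    destruct (HG2.(swap_graph_image) z0 w2 Hz0' A2 Hs) as [Hw2 Hw2'].
    apply set_ext; auto; intro v; rewrite Hw1', Hw2'.
    split; intros [z' [Hz' Ha]]; exists z'; split; auto.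
    + destruct (HG2.(swap_graph_total) z' (Ht2 z0 z' Hz0' Hz')) as [v' Hv'].
      replace v with v'; [exact Hv' |].
      symmetry; exact (IH z' Hz' (Ht1 z0 z' Hz0 Hz') (Ht2 z0 z' Hz0' Hz') v v' Ha Hv').
    + destruct (HG1.(swap_graph_total) z' (Ht1 z0 z' Hz0 Hz')) as [v' Hv'].
      replace v with v'; [exact Hv' |].
      exact (IH z' Hz' (Ht1 z0 z' Hz0 Hz') (Ht2 z0 z' Hz0' Hz') v' v Hv' Ha).
Qed.

Lemma swap_graph_unique G1 G2 t : transitive t ->
  swap_graph b c G1 t -> swap_graph b c G2 t -> G1 = G2.
Proof.
  intros Ht H1 H2.
  assert (Hsub : forall G G', swap_graph b c G t -> swap_graph b c G' t ->
            forall p, mem p G -> mem p G').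
  { intros G G' HG HG' p Hp.
    destruct (HG.(swap_graph_pairs) p Hp) as [z [w [Hz Hpz]]].
    destruct (HG'.(swap_graph_total) z Hz) as [w' [p' [Hp' Hp'z]]].
    assert (w = w') as <-
      by (apply (swap_graph_agree G t G' t Ht Ht HG HG' z w w' Hz Hz);
          [exists p | exists p']; auto).
    rewrite (pair_unique p p' z w); auto. }
  apply set_ext; [exact H1.(swap_graph_set) | exact H2.(swap_graph_set) |].
  intro p; split; apply Hsub; auto.
Qed.

Lemma swap_graph_restrict G t s : transitive s -> (forall z, mem z s -> mem z t) ->
  swap_graph b c G t -> exists G', swap_graph b c G' s.
Proof.
  intros [_ Hs] Hst HG.
  assert (DP : definable (fun e => exists z w, is_pair (e 0) z w /\ mem z (e 1)))
    by (unfold is_pair; solve_definable).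
  destruct (separation _ DP (scons s (fun _ => s)) G) as [G' [HG' HG'']]; simpl in HG''.
  assert (Happ : forall z w, mem z s -> (maps_to G' z w <-> maps_to G z w)).
  { intros z w Hz; split; intros [p [Hp Hpz]]; exists p; split; auto.
    - apply HG'' in Hp; tauto.
    - apply HG''; split; eauto. }
  exists G'; constructor; [exact HG' | | | | |].
  - intros p Hp; apply HG'' in Hp; destruct Hp as [_ [z [w [Hpz Hz]]]]; eauto.
  - intros z Hz; destruct (HG.(swap_graph_total) z (Hst z Hz)) as [w Hw].
    exists w; apply Happ; auto.
  - intros z w w' Hz A1 A2; apply (HG.(swap_graph_functional) z w w' (Hst z Hz)); apply Happ; auto.
  - intros z w Hz A Hu; apply (HG.(swap_graph_ur) z w (Hst z Hz)); auto; apply Happ; auto.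
  - intros z w Hz A Hu; apply Happ in A; auto.
    destruct (HG.(swap_graph_image) z w (Hst z Hz) A Hu) as [Hw Hw'].
    split; [exact Hw |]; intro v; rewrite Hw'.
    split; intros [z' [Hz' Ha]]; exists z'; split; auto; apply Happ; eauto.
Qed.

Lemma swap_graph_on_TC_sep T z : transitive T -> mem z T ->
  (exists t G, transitive t /\ mem z t /\ swap_graph b c G t) ->
  exists s g, (~ ur s /\ forall y, mem y s <-> mem y T /\ in_TC y z) /\ swap_graph b c g s.
Proof.
  intros HT Hz [t [G [Ht [Hzt HG]]]].
  destruct (separation _ (definable_in_TC 0 1) (scons z (fun _ => z)) T) as [s [Hs Hs']].
  simpl in Hs'.
  destruct (swap_graph_restrict G t s) as [g Hg]; auto.
  - exact (transitive_TC_sep T z s HT Hs Hs').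
  - intros y Hy; apply Hs' in Hy; exact (proj2 Hy t Ht Hzt).
  - exists s, g; auto.
Qed.

Lemma swap_graph_union Y t0 : transitive t0 ->
  (forall g, mem g Y -> exists s, transitive s /\ (forall y, mem y s -> mem y t0) /\
                                   swap_graph b c g s) ->
  (forall y, mem y t0 -> exists g w, mem g Y /\ maps_to g y w) ->
  exists H, swap_graph b c H t0.
Proof.
  intros [_ Ht0] HY Hcover; destruct (union_ex Y) as [H [HH HH']].
  assert (HappH : forall y w, maps_to H y w <-> exists g, mem g Y /\ maps_to g y w).
  { intros y w; split.
    - intros [p [Hp Hpy]]; apply HH' in Hp; destruct Hp as [g [Hg Hpg]].
      exists g; split; [exact Hg | exists p; auto].
    - intros [g [Hg [p [Hp Hpy]]]]; exists p; split; [apply HH'; eauto | exact Hpy]. }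
  assert (FH : forall y w w', maps_to H y w -> maps_to H y w' -> w = w').
  { intros y w w' A1 A2; apply HappH in A1, A2.
    destruct A1 as [g1 [Hg1 A1]], A2 as [g2 [Hg2 A2]].
    destruct (HY g1 Hg1) as [s1 [Hs1 [_ HG1]]], (HY g2 Hg2) as [s2 [Hs2 [_ HG2]]].
    exact (swap_graph_agree g1 s1 g2 s2 Hs1 Hs2 HG1 HG2 y w w'
             (maps_to_dom g1 s1 y w HG1 A1) (maps_to_dom g2 s2 y w' HG2 A2) A1 A2). }
  exists H; constructor; [exact HH | | | | |].
  - intros p Hp; apply HH' in Hp; destruct Hp as [g [Hg Hpg]].
    destruct (HY g Hg) as [s [_ [Hst HG]]].
    destruct (HG.(swap_graph_pairs) p Hpg) as [z [w [Hz Hpz]]]; eauto.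
  - intros y Hy; destruct (Hcover y Hy) as [g [w [Hg A]]]; exists w; apply HappH; eauto.
  - intros z w w' _; apply FH.
  - intros z w _ A Hu; apply HappH in A; destruct A as [g [Hg A]].
    destruct (HY g Hg) as [s [_ [_ HG]]].
    exact (HG.(swap_graph_ur) z w (maps_to_dom g s z w HG A) A Hu).
  - intros z w Hz A Hu; apply HappH in A; destruct A as [g [Hg A]].
    destruct (HY g Hg) as [s [[_ Hs] [_ HG]]]; pose proof (maps_to_dom g s z w HG A) as Hzs.
    destruct (HG.(swap_graph_image) z w Hzs A Hu) as [Hw Hw'].
    split; [exact Hw |]; intro v; rewrite Hw'.
    split; intros [y [Hy Ay]]; exists y; split; auto.
    + apply HappH; eauto.
    + destruct (HG.(swap_graph_total) y (Hs z y Hzs Hy)) as [v' Hv'].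
      replace v with v'; [exact Hv' | apply (FH y); [apply HappH; eauto | exact Ay]].
Qed.

Lemma swap_value_ex H t0 z0 : swap_graph b c H t0 -> (forall z, mem z z0 -> mem z t0) ->
  exists w0, (ur z0 -> transposes b c z0 w0) /\
    (~ ur z0 -> ~ ur w0 /\ forall v, mem v w0 <-> exists z', mem z' z0 /\ maps_to H z' v).
Proof.
  intros HH Hz0t0; destruct (classic (ur z0)) as [Hu | Hs].
  - destruct (transposes_ex z0) as [w0 Hw0]; exists w0; split; [auto | contradiction].
  - assert (DA : definable (fun e => maps_to (e 2) (e 1) (e 0))) by solve_definable.
    destruct (replacement _ DA (scons H (fun _ => H)) z0) as [w0 [Hw0 Hw0']].
    { intros u Hu; destruct (HH.(swap_graph_total) u (Hz0t0 u Hu)) as [v Hv].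
      exists v; split; [exact Hv |].
      intros v' Hv'; exact (HH.(swap_graph_functional) u v' v (Hz0t0 u Hu) Hv' Hv). }
    exists w0; split; [contradiction | split; assumption].
Qed.

Lemma swap_graph_adjoin H t0 z0 : transitive t0 -> swap_graph b c H t0 ->
  ~ mem z0 t0 -> (forall z, mem z z0 -> mem z t0) ->
  exists t G, transitive t /\ mem z0 t /\ swap_graph b c G t.
Proof.
  intros [Ht0 Ht0tr] HH Hz0t0 Hzt0.
  destruct (swap_value_ex H t0 z0 HH Hzt0) as [w0 [Hw0u Hw0s]].
  destruct (pair_ex z0 w0) as [p0 Hp0].
  destruct (adjoin_ex H p0) as [G [HG HG']].
  destruct (adjoin_ex t0 z0) as [t [Ht Ht']].
  pose proof (maps_to_adjoin H p0 G z0 w0 Hp0 HG') as HappG.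
  assert (HappG' : forall y w, mem y t0 -> (maps_to G y w <-> maps_to H y w)).
  { intros y w Hy; rewrite HappG; split; [intros [A | [-> _]]; [exact A | contradiction] | auto]. }
  assert (HappG0 : forall w, maps_to G z0 w <-> w = w0).
  { intro w; rewrite HappG; split; [| intros ->; auto].
    intros [A | [_ A]]; [exfalso; exact (Hz0t0 (maps_to_dom H t0 z0 w HH A)) | exact A]. }
  assert (Hmemt : forall y, mem y t -> mem y t0 \/ y = z0) by (intro; apply Ht').
  exists t, G; split; [| split; [apply Ht'; auto |]].
  { split; [exact Ht |]; intros y u Hy Hu; apply Ht'; left.
    destruct (Hmemt y Hy) as [Hy' | ->]; eauto. }
  constructor; [exact HG | | | | |].
  - intros p Hp; apply HG' in Hp; destruct Hp as [Hp | ->].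
    + destruct (HH.(swap_graph_pairs) p Hp) as [z [w [Hz Hpz]]].
      exists z, w; split; [apply Ht'; auto | exact Hpz].
    + exists z0, w0; split; [apply Ht'; auto | exact Hp0].
  - intros z Hz; destruct (Hmemt z Hz) as [Hz' | ->].
    + destruct (HH.(swap_graph_total) z Hz') as [w Hw]; exists w; apply HappG'; auto.
    + exists w0; apply HappG0; auto.
  - intros z w w' Hz A1 A2; destruct (Hmemt z Hz) as [Hz' | ->].
    + apply HappG' in A1, A2; auto; exact (HH.(swap_graph_functional) z w w' Hz' A1 A2).
    + apply HappG0 in A1, A2; congruence.
  - intros z w Hz A Hu; destruct (Hmemt z Hz) as [Hz' | ->].
    + apply HappG' in A; auto; exact (HH.(swap_graph_ur) z w Hz' A Hu).
    + apply HappG0 in A; subst w; auto.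
  - intros z w Hz A Hs.
    assert (Himg : forall y v, mem y z -> maps_to G y v <-> maps_to H y v).
    { intros y v Hy; apply HappG'; destruct (Hmemt z Hz) as [Hz' | ->]; eauto. }
    destruct (Hmemt z Hz) as [Hz' | ->].
    + apply HappG' in A; auto.
      destruct (HH.(swap_graph_image) z w Hz' A Hs) as [Hw Hw'].
      split; [exact Hw |]; intro v; rewrite Hw'.
      split; intros [y [Hy Ay]]; exists y; split; auto; apply Himg; auto.
    + apply HappG0 in A; subst w; destruct (Hw0s Hs) as [Hw0 Hw0'].
      split; [exact Hw0 |]; intro v; rewrite Hw0'.
      split; intros [y [Hy Ay]]; exists y; split; auto; apply Himg; auto.
Qed.

Lemma swap_graph_ex T : transitive T -> forall x, mem x T ->
  exists t G, transitive t /\ mem x t /\ swap_graph b c G t.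
Proof.
  intros HT.
  assert (DP : definable (fun e => exists t G, transitive t /\ mem (e 0) t /\
                                             swap_graph (e 1) (e 2) G t))
    by (unfold Defs.transitive; solve_definable).
  refine (mem_ind _ DP (scons b (scons c (fun _ => b))) T _).
  intros z0 Hz0 IH; simpl in IH |- *.
  assert (Hz0T : forall z', mem z' z0 -> mem z' T) by (destruct HT as [_ HT]; eauto).
  destruct (classic (exists z', mem z' z0 /\ in_TC z0 z')) as [[z' [Hz' Hin]] | Hnot].
  { destruct (IH z' Hz' (Hz0T z' Hz')) as [t' [G' [Ht' [Hz't' HG']]]].
    exists t', G'; auto. }
  assert (DR : definable (fun e => exists s, (~ ur s /\ forall y, mem y s <-> mem y (e 2) /\
                 in_TC y (e 1)) /\ swap_graph (e 3) (e 4) (e 0) s)) by solve_definable.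
  destruct (replacement _ DR (scons T (scons b (scons c (fun _ => T)))) z0) as [Y [_ HY]].
  { intros z' Hz'; simpl.
    destruct (swap_graph_on_TC_sep T z' HT (Hz0T z' Hz') (IH z' Hz' (Hz0T z' Hz')))
      as [s [g [Hs Hg]]].
    exists g; split; [exists s; auto |].
    intros g' [s' [[Hs2 Hs2'] Hg']].
    assert (s' = s) as ->
      by (apply set_ext; [exact Hs2 | apply Hs | intro y; rewrite Hs2'; symmetry; apply Hs]).
    exact (swap_graph_unique g' g s (transitive_TC_sep T z' s HT (proj1 Hs) (proj2 Hs)) Hg' Hg). }
  simpl in HY.
  assert (DT : definable (fun e => exists z', mem z' (e 1) /\ in_TC (e 0) z')) by solve_definable.
  destruct (separation _ DT (scons z0 (fun _ => z0)) T) as [t0 [Ht0 Ht0']]; simpl in Ht0'.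
  assert (Ht0tr : transitive t0).
  { split; [exact Ht0 |]; intros y u Hy Hu; apply Ht0' in Hy; apply Ht0'.
    destruct Hy as [HyT [z' [Hz' Hyz']]], HT as [_ HT].
    split; [exact (HT y u HyT Hu) |].
    exists z'; split; [exact Hz' | exact (in_TC_step z' y u Hyz' Hu)]. }
  destruct (swap_graph_union Y t0 Ht0tr) as [H HH].
  - intros g Hg; apply HY in Hg; destruct Hg as [z' [Hz' [s [[Hs Hs'] Hgs]]]].
    exists s; split; [exact (transitive_TC_sep T z' s HT Hs Hs') | split; [| exact Hgs]].
    intros y Hy; apply Hs' in Hy; apply Ht0'.
    split; [exact (proj1 Hy) | exists z'; split; [exact Hz' | exact (proj2 Hy)]].
  - intros y Hy; apply Ht0' in Hy; destruct Hy as [HyT [z' [Hz' Hyz']]].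
    destruct (swap_graph_on_TC_sep T z' HT (Hz0T z' Hz') (IH z' Hz' (Hz0T z' Hz')))
      as [s [g [[Hs Hs'] Hg]]].
    destruct (Hg.(swap_graph_total) y (proj2 (Hs' y) (conj HyT Hyz'))) as [w Hw].
    exists g, w; split; [apply HY; exists z'; split; [exact Hz' | exists s; auto] | exact Hw].
  - apply (swap_graph_adjoin H t0 z0 Ht0tr HH).
    + intro Hm; apply Ht0' in Hm; destruct Hm as [_ [z' [Hz' Hin]]]; apply Hnot; eauto.
    + intros z' Hz'; apply Ht0'; split; [exact (Hz0T z' Hz') |].
      exists z'; split; [exact Hz' | apply in_TC_refl].
Qed.

Lemma swap_graph_on_TC x : has_trans x -> exists s G,
  transitive s /\ mem x s /\ (forall y, mem y s <-> in_TC y x) /\ swap_graph b c G s.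
Proof.
  intros HT; destruct (TC_ex x HT) as [s [Hs [Hxs Hs']]].
  destruct (swap_graph_ex s Hs x Hxs) as [t [G [Ht [Hxt HG]]]].
  destruct (swap_graph_restrict G t s Hs) as [G' HG']; [| exact HG | exists s, G'; auto].
  intros y Hy; apply Hs' in Hy; exact (Hy t Ht Hxt).
Qed.

Lemma swap_graph_injective G t : transitive t -> swap_graph b c G t ->
  forall z1 z2 w, mem z1 t -> mem z2 t -> maps_to G z1 w -> maps_to G z2 w -> z1 = z2.
Proof.
  intros [_ Ht] HG.
  assert (DP : definable (fun e => forall z2 w, mem z2 (e 1) ->
                 maps_to (e 2) (e 0) w -> maps_to (e 2) z2 w -> e 0 = z2)) by solve_definable.
  intros z1 z2 w Hz1 Hz2; revert z2 w Hz2.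
  refine (mem_ind _ DP (scons t (scons G (fun _ => t))) t _ z1 Hz1).
  intros z0 Hz0 IH; simpl in IH |- *; intros z2 w Hz2 A1 A2.
  destruct (classic (ur z0)) as [Hu | Hs]; destruct (classic (ur z2)) as [Hu2 | Hs2].
  - exact (transposes_injective z0 z2 w (HG.(swap_graph_ur) z0 w Hz0 A1 Hu)
                                         (HG.(swap_graph_ur) z2 w Hz2 A2 Hu2)).
  - exfalso; apply (proj1 (HG.(swap_graph_image) z2 w Hz2 A2 Hs2)).
    exact (transposes_ur z0 w (HG.(swap_graph_ur) z0 w Hz0 A1 Hu) Hu).
  - exfalso; apply (proj1 (HG.(swap_graph_image) z0 w Hz0 A1 Hs)).
    exact (transposes_ur z2 w (HG.(swap_graph_ur) z2 w Hz2 A2 Hu2) Hu2).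
  - destruct (HG.(swap_graph_image) z0 w Hz0 A1 Hs) as [Hw Hw1].
    destruct (HG.(swap_graph_image) z2 w Hz2 A2 Hs2) as [_ Hw2].
    apply set_ext; auto; intro u; split; intro Hu.
    + destruct (HG.(swap_graph_total) u (Ht z0 u Hz0 Hu)) as [v Hv].
      assert (Hvw : mem v w) by (apply Hw1; eauto).
      apply Hw2 in Hvw; destruct Hvw as [u2 [Hu2 Av]].
      rewrite (IH u Hu (Ht z0 u Hz0 Hu) u2 v (Ht z2 u2 Hz2 Hu2) Hv Av); exact Hu2.
    + destruct (HG.(swap_graph_total) u (Ht z2 u Hz2 Hu)) as [v Hv].
      assert (Hvw : mem v w) by (apply Hw2; eauto).
      apply Hw1 in Hvw; destruct Hvw as [u1 [Hu1 Av]].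
      rewrite <- (IH u1 Hu1 (Ht z0 u1 Hz0 Hu1) u v (Ht z2 u Hz2 Hu) Av Hv); exact Hu1.
Qed.

Lemma swap_graph_range G t : transitive t -> swap_graph b c G t ->
  exists t', transitive t' /\ forall w, mem w t' <-> exists z, mem z t /\ maps_to G z w.
Proof.
  intros [_ Ht] HG.
  assert (DA : definable (fun e => maps_to (e 2) (e 1) (e 0))) by solve_definable.
  destruct (replacement _ DA (scons G (fun _ => G)) t) as [t' [Ht' Ht'']].
  { intros u Hu; destruct (HG.(swap_graph_total) u Hu) as [v Hv]; exists v; split; [exact Hv |].
    intros v' Hv'; exact (HG.(swap_graph_functional) u v' v Hu Hv' Hv). }
  simpl in Ht''; exists t'; split; [split; [exact Ht' |] | exact Ht''].
  intros w v Hw Hv; apply Ht'' in Hw; destruct Hw as [z [Hz A]]; apply Ht''.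
  destruct (classic (ur z)) as [Hu | Hs].
  - exfalso; exact (ur_no_mem w v (transposes_ur z w (HG.(swap_graph_ur) z w Hz A Hu) Hu) Hv).
  - apply (HG.(swap_graph_image) z w Hz A Hs) in Hv; destruct Hv as [z' [Hz' A']]; eauto.
Qed.

Lemma swap_graph_converse G t t' : transitive t -> swap_graph b c G t ->
  (forall w, mem w t' <-> exists z, mem z t /\ maps_to G z w) ->
  exists K, swap_graph b c K t' /\ forall z w, maps_to K w z <-> maps_to G z w.
Proof.
  intros Ht HG Ht'.
  destruct (converse_ex G) as [K [HK [HKpairs HappK]]].
  { intros p Hp; destruct (HG.(swap_graph_pairs) p Hp) as [z [w [_ Hpz]]]; eauto. }
  assert (Hdom : forall z w, maps_to G z w -> mem z t)
    by (intros z w; exact (maps_to_dom G t z w HG)).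
  assert (Htr : forall z u, mem z t -> mem u z -> mem u t) by (destruct Ht as [_ Ht]; exact Ht).
  exists K; split; [constructor; [exact HK | | | | |] | exact HappK].
  - intros q Hq; destruct (HKpairs q Hq) as [z [w [A Hqw]]].
    exists w, z; split; [apply Ht'; exists z; split; [exact (Hdom z w A) | exact A] | exact Hqw].
  - intros w Hw; apply Ht' in Hw; destruct Hw as [z [Hz A]]; exists z; apply HappK; exact A.
  - intros w z1 z2 Hw A1 A2; apply HappK in A1, A2.
    exact (swap_graph_injective G t Ht HG z1 z2 w (Hdom z1 w A1) (Hdom z2 w A2) A1 A2).
  - intros w z Hw A Hu; apply HappK in A; destruct (classic (ur z)) as [Hzu | Hzs].
    + exact (transposes_sym z w (HG.(swap_graph_ur) z w (Hdom z w A) A Hzu)).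
    + exfalso; exact (proj1 (HG.(swap_graph_image) z w (Hdom z w A) A Hzs) Hu).
  - intros w z Hw A Hs; apply HappK in A; pose proof (Hdom z w A) as Hz.
    destruct (classic (ur z)) as [Hzu | Hzs].
    + exfalso; exact (Hs (transposes_ur z w (HG.(swap_graph_ur) z w Hz A Hzu) Hzu)).
    + destruct (HG.(swap_graph_image) z w Hz A Hzs) as [_ Hw']; split; [exact Hzs |].
      intro u; split.
      * intro Hu; destruct (HG.(swap_graph_total) u (Htr z u Hz Hu)) as [v Hv].
        exists v; split; [apply Hw'; eauto | apply HappK; exact Hv].
      * intros [w' [Hw'w A']]; apply HappK in A'; apply Hw' in Hw'w.
        destruct Hw'w as [z' [Hz' A'']].
        rewrite (swap_graph_injective G t Ht HG u z' w' (Hdom u w' A') (Htr z z' Hz Hz') A' A'').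
        exact Hz'.
Qed.

Definition swap (x : M) : M :=
  epsilon (inhabits x)
    (fun y => exists t G, transitive t /\ mem x t /\ swap_graph b c G t /\ maps_to G x y).

Lemma swap_maps_to x t G : has_trans x -> transitive t -> mem x t ->
  swap_graph b c G t -> maps_to G x (swap x).
Proof.
  intros HT Ht Hxt HG.
  assert (Hspec : exists t' G', transitive t' /\ mem x t' /\ swap_graph b c G' t' /\
                                maps_to G' x (swap x)).
  { unfold swap; apply epsilon_spec.
    destruct (swap_graph_on_TC x HT) as [s [G' [Hs [Hxs [_ HG']]]]].
    destruct (HG'.(swap_graph_total) x Hxs) as [w Hw]; exists w, s, G'; auto. }
  destruct Hspec as [t' [G' [Ht' [Hxt' [HG' A']]]]].
  destruct (HG.(swap_graph_total) x Hxt) as [w Hw].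
  replace (swap x) with w; [exact Hw |].
  exact (swap_graph_agree G t G' t' Ht Ht' HG HG' x w (swap x) Hxt Hxt' Hw A').
Qed.

Lemma swap_ur x : has_trans x -> (ur (swap x) <-> ur x).
Proof.
  intros HT; destruct (swap_graph_on_TC x HT) as [s [G [Hs [Hxs [_ HG]]]]].
  pose proof (swap_maps_to x s G HT Hs Hxs HG) as A.
  destruct (classic (ur x)) as [Hu | Hn]; split; intro H; auto.
  - exact (transposes_ur x _ (HG.(swap_graph_ur) x _ Hxs A Hu) Hu).
  - exfalso; exact (proj1 (HG.(swap_graph_image) x _ Hxs A Hn) H).
  - contradiction.
Qed.

Lemma swap_mem x y : has_trans x -> mem y x -> mem (swap y) (swap x).
Proof.
  intros HT Hy; destruct (swap_graph_on_TC x HT) as [s [G [Hs [Hxs [_ HG]]]]].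
  assert (Hys : mem y s) by (destruct Hs as [_ Hs]; eauto).
  pose proof (swap_maps_to x s G HT Hs Hxs HG) as A.
  pose proof (swap_maps_to y s G (has_trans_mem x y HT Hy) Hs Hys HG) as Ay.
  assert (Hx : ~ ur x) by (intro Hu; exact (ur_no_mem x y Hu Hy)).
  apply (HG.(swap_graph_image) x _ Hxs A Hx); eauto.
Qed.

Lemma swap_mem_inv x v : has_trans x -> mem v (swap x) -> exists y, mem y x /\ v = swap y.
Proof.
  intros HT Hv; destruct (swap_graph_on_TC x HT) as [s [G [Hs [Hxs [_ HG]]]]].
  pose proof (swap_maps_to x s G HT Hs Hxs HG) as A.
  destruct (classic (ur x)) as [Hu | Hn].
  - exfalso; apply (ur_no_mem (swap x) v); [apply swap_ur |]; assumption.
  - apply (HG.(swap_graph_image) x _ Hxs A Hn) in Hv; destruct Hv as [y [Hy Ay]].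
    exists y; split; [exact Hy |].
    assert (Hys : mem y s) by (destruct Hs as [_ Hs]; eauto).
    exact (HG.(swap_graph_functional) y v (swap y) Hys Ay
             (swap_maps_to y s G (has_trans_mem x y HT Hy) Hs Hys HG)).
Qed.

Lemma swap_has_trans x : has_trans x -> has_trans (swap x).
Proof.
  intros HT; destruct (swap_graph_on_TC x HT) as [s [G [Hs [Hxs [_ HG]]]]].
  destruct (swap_graph_range G s Hs HG) as [t' [Ht' Ht'']].
  exists t'; split; [exact Ht' |]; apply Ht''.
  exists x; split; [exact Hxs | exact (swap_maps_to x s G HT Hs Hxs HG)].
Qed.

Lemma swap_involutive x : has_trans x -> swap (swap x) = x.
Proof.
  intros HT; destruct (swap_graph_on_TC x HT) as [s [G [Hs [Hxs [_ HG]]]]].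
  destruct (swap_graph_range G s Hs HG) as [t' [Ht' Ht'']].
  destruct (swap_graph_converse G s t' Hs HG Ht'') as [K [HK HKG]].
  pose proof (swap_maps_to x s G HT Hs Hxs HG) as A.
  assert (Hpt' : mem (swap x) t') by (apply Ht''; eauto).
  pose proof (swap_maps_to (swap x) t' K (swap_has_trans x HT) Ht' Hpt' HK) as A2.
  apply (HK.(swap_graph_functional) (swap x)); [exact Hpt' | exact A2 | apply HKG, A].
Qed.

Lemma swap_inj x y : has_trans x -> has_trans y -> swap x = swap y -> x = y.
Proof.
  intros Hx Hy E; rewrite <- (swap_involutive x Hx), <- (swap_involutive y Hy), E; reflexivity.
Qed.

Lemma swap_fixed x : has_trans x ->
  (forall a, ur a -> in_TC a x -> a <> b /\ a <> c) -> swap x = x.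
Proof.
  intros HT Hfix; destruct (swap_graph_on_TC x HT) as [s [G [Hs [Hxs [Hs' HG]]]]].
  assert (DP : definable (fun e => maps_to (e 1) (e 0) (e 0))) by solve_definable.
  assert (Hid : forall z, mem z s -> maps_to G z z).
  { refine (mem_ind _ DP (scons G (fun _ => G)) s _).
    intros z Hz IH; simpl in IH |- *; destruct (HG.(swap_graph_total) z Hz) as [w Hw].
    replace z with w at 2; [exact Hw |].
    destruct (classic (ur z)) as [Hu | Hn].
    - pose proof (HG.(swap_graph_ur) z w Hz Hw Hu) as Hsw.
      destruct (Hfix z Hu) as [Hb Hc]; [apply Hs'; exact Hz |].
      unfold transposes in Hsw; intuition congruence.
    - destruct (HG.(swap_graph_image) z w Hz Hw Hn) as [Hw1 Hw2].
      apply set_ext; auto; intro v; rewrite Hw2; split.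
      + intros [z' [Hz' A]].
        assert (Hz's : mem z' s) by (destruct Hs as [_ Hs]; eauto).
        replace v with z'; [exact Hz' |].
        exact (HG.(swap_graph_functional) z' z' v Hz's (IH z' Hz' Hz's) A).
      + intro Hv; exists v; split; [exact Hv |].
        apply IH; [exact Hv | destruct Hs as [_ Hs]; eauto]. }
  exact (HG.(swap_graph_functional) x _ x Hxs (swap_maps_to x s G HT Hs Hxs HG) (Hid x Hxs)).
Qed.

Lemma swap_TC_ur x w : has_trans x -> ur w -> in_TC w (swap x) ->
  exists z, ur z /\ in_TC z x /\ transposes b c z w.
Proof.
  intros HT Hw Hin; destruct (swap_graph_on_TC x HT) as [s [G [Hs [Hxs [Hs' HG]]]]].
  destruct (swap_graph_range G s Hs HG) as [t' [Ht' Ht'']].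
  assert (Hpt' : mem (swap x) t')
    by (apply Ht''; exists x; split; [exact Hxs | exact (swap_maps_to x s G HT Hs Hxs HG)]).
  pose proof (Hin t' Ht' Hpt') as Hwt; apply Ht'' in Hwt; destruct Hwt as [z [Hz A]].
  destruct (classic (ur z)) as [Hu | Hn].
  - exists z; split; [exact Hu | split; [apply Hs', Hz | exact (HG.(swap_graph_ur) z w Hz A Hu)]].
  - exfalso; exact (proj1 (HG.(swap_graph_image) z w Hz A Hn) Hw).
Qed.

End Swap.

(** * The class U^I *)

Section Ideal.
Variables (phiI : form) (eI : nat -> M).
Hypothesis HI : is_A_ideal M mem ur (defined_class mem ur phiI eI).

Notation I := (defined_class mem ur phiI eI).
Notation U := (U_ideal M mem ur I).

Lemma ideal_urelements k : I k -> ~ ur k /\ forall z, mem z k -> ur z.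
Proof. destruct HI as [H _]; apply H. Qed.

Lemma ideal_not_all k : ~ ur k -> (forall z, mem z k <-> ur z) -> ~ I k.
Proof. destruct HI as [_ [H _]]; apply H. Qed.

Lemma ideal_subset x y : I x -> ~ ur y -> (forall z, mem z y -> mem z x) -> I y.
Proof. destruct HI as [_ [_ [_ [_ [H _]]]]]; apply H. Qed.

Lemma ideal_singleton a s : ur a -> ~ ur s -> (forall z, mem z s <-> z = a) -> I s.
Proof. destruct HI as [_ [_ [_ [_ [_ H]]]]]; apply H. Qed.

Lemma ideal_empty_ex : exists o, I o /\ forall z, ~ mem z o.
Proof.
  destruct empty_set_ex as [o [Ho Ho']]; exists o; split; [| exact Ho'].
  destruct HI as [_ [_ [H _]]]; exact (H o Ho Ho').
Qed.

Lemma ideal_union2_ex x y : I x -> I y ->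
  exists u, I u /\ forall z, mem z u <-> mem z x \/ mem z y.
Proof.
  intros Hx Hy; destruct (union2_ex x y) as [u [Hu Hu']]; exists u; split; [| exact Hu'].
  destruct HI as [_ [_ [_ [H _]]]]; exact (H x y u Hx Hy Hu Hu').
Qed.

Lemma ideal_avoid K : I K -> exists c, ur c /\ ~ mem c K.
Proof.
  intros HK; apply NNPP; intro Hno.
  apply (ideal_not_all K (proj1 (ideal_urelements K HK))); [| exact HK].
  intro z; split; [apply (ideal_urelements K HK) | intro Hz; apply NNPP; eauto].
Qed.

Lemma U_ker x : U x -> exists k, I k /\ forall a, ur a -> in_TC a x -> mem a k.
Proof. intros [k [[_ Hk] HIk]]; exists k; split; [exact HIk | intros a Ha Hin; apply Hk; auto]. Qed.

Lemma U_intro y t S : transitive t -> mem y t -> I S ->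
  (forall a, ur a -> mem a t -> mem a S) -> U y.
Proof.
  intros Ht Hy HS HSt.
  destruct (separation _ (definable_in_TC 0 1) (scons y (fun _ => y)) S) as [k [Hk Hk']].
  simpl in Hk'; exists k; split.
  - split; [exact Hk |]; intro a; rewrite Hk'; split.
    + intros [H1 H2]; split; [exact (proj2 (ideal_urelements S HS) a H1) | exact H2].
    + intros [H1 H2]; split; [exact (HSt a H1 (H2 t Ht Hy)) | exact H2].
  - apply (ideal_subset S); [exact HS | exact Hk | intros z Hz; exact (proj1 (proj1 (Hk' z) Hz))].
Qed.

(* Elements without a transitive superset are excluded because their kernel would be the
   set of all urelements. *)
Lemma U_has_trans x : U x -> has_trans x.
Proof.
  intros [k [[Hk Hk'] HIk]]; apply NNPP; intro HN.
  apply (ideal_not_all k Hk); [| exact HIk]; intro z; rewrite Hk'; split; [tauto |].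
  intro Hz; split; [exact Hz |]; intros t Ht Hx; exfalso; apply HN; exists t; auto.
Qed.

Lemma U_bounded_trans x : U x -> exists t S, transitive t /\ mem x t /\ I S /\
  forall a, ur a -> mem a t -> mem a S.
Proof.
  intros HU; destruct (TC_ex x (U_has_trans x HU)) as [s [Hs [Hxs Hs']]].
  destruct (U_ker x HU) as [k [Hk Hxk]].
  exists s, k; split; [exact Hs | split; [exact Hxs | split; [exact Hk |]]].
  intros a Ha Has; apply Hxk, Hs'; assumption.
Qed.

Lemma U_mem x y : U x -> mem y x -> U y.
Proof.
  intros HU Hy; destruct (U_bounded_trans x HU) as [t [S [Ht [Hxt [HS HtS]]]]].
  apply (U_intro y t S); auto; destruct Ht as [_ Ht]; eauto.
Qed.

Lemma U_ur a : ur a -> U a.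
Proof.
  intros Ha; destruct (singleton_ex a) as [s [Hs Hs']].
  apply (U_intro a s s); [| apply Hs'; auto | exact (ideal_singleton a s Ha Hs Hs') | auto].
  split; [exact Hs |]; intros y z Hy Hz; apply Hs' in Hy; subst y; destruct (ur_no_mem a z Ha Hz).
Qed.

Lemma U_of_subset_trans y t S : transitive t -> ~ ur y -> (forall z, mem z y -> mem z t) ->
  I S -> (forall a, ur a -> mem a t -> mem a S) -> U y.
Proof.
  intros [Ht Ht'] Hy Hyt HS HSt; destruct (adjoin_ex t y) as [t2 [Ht2 Ht2']].
  apply (U_intro y t2 S); [| apply Ht2'; auto | exact HS |].
  - split; [exact Ht2 |]; intros u z Hu Hz; apply Ht2'; apply Ht2' in Hu; left.
    destruct Hu as [Hu | ->]; eauto.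
  - intros a Ha Hat; apply Ht2' in Hat; destruct Hat as [Hat | ->]; [auto | contradiction].
Qed.

Lemma U_of_subset_TC x y : U x -> ~ ur y -> (forall z, mem z y -> in_TC z x) -> U y.
Proof.
  intros HU Hy Hz; destruct (U_bounded_trans x HU) as [t [S [Ht [Hxt [HS HtS]]]]].
  apply (U_of_subset_trans y t S); auto; intros z Hzy; exact (Hz z Hzy t Ht Hxt).
Qed.

Lemma U_ax_urelements : ax_urelements M U mem ur.
Proof. intros a _ Ha z _; apply ur_no_mem, Ha. Qed.

Lemma U_ax_extensionality : ax_extensionality M U mem ur.
Proof.
  intros x y Hx Hy Sx Sy H; apply set_ext; auto; intro z; split; intro Hz.
  - apply H; [exact (U_mem x z Hx Hz) | exact Hz].
  - apply H; [exact (U_mem y z Hy Hz) | exact Hz].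
Qed.

Lemma U_ax_foundation : ax_foundation M U mem.
Proof.
  intros x Hx [y [_ Hyx]]; destruct (mem_minimal x (ex_intro _ y Hyx)) as [y0 [H1 H2]].
  exists y0; split; [exact (U_mem x y0 Hx H1) | split; [exact H1 | intros z _; apply H2]].
Qed.

Lemma U_ax_pairing : ax_pairing M U mem ur.
Proof.
  intros x y Hx Hy; destruct (pair_set_ex x y) as [p [Hp Hp']].
  exists p; split; [| split; [exact Hp | intros z _; apply Hp']].
  destruct (U_bounded_trans x Hx) as [t1 [S1 [Ht1 [Hxt1 [HS1 Ht1S1]]]]].
  destruct (U_bounded_trans y Hy) as [t2 [S2 [Ht2 [Hyt2 [HS2 Ht2S2]]]]].
  destruct (transitive_union2 t1 t2 Ht1 Ht2) as [t [Ht Ht']].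
  destruct (ideal_union2_ex S1 S2 HS1 HS2) as [S [HS HS']].
  apply (U_of_subset_trans p t S); auto.
  - intros z Hz; apply Ht'; apply Hp' in Hz; destruct Hz; subst; auto.
  - intros a Ha Hat; apply HS'; apply Ht' in Hat; destruct Hat; auto.
Qed.

Lemma U_ax_union : ax_union M U mem ur.
Proof.
  intros x Hx; destruct (union_ex x) as [u [Hu Hu']].
  exists u; split; [| split; [exact Hu |]].
  - apply (U_of_subset_TC x); auto; intros z Hz; apply Hu' in Hz; destruct Hz as [y [Hy Hzy]].
    exact (in_TC_step x y z (in_TC_mem x y Hy) Hzy).
  - intros z _; rewrite Hu'; split.
    + intros [y [Hy Hzy]]; exists y; split; [exact (U_mem x y Hx Hy) | auto].
    + intros [y [_ H]]; exists y; exact H.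
Qed.

Lemma U_ax_powerset : ax_powerset M U mem ur.
Proof.
  intros x Hx; destruct (powerset_ex x) as [p [Hp Hp']].
  exists p; split; [| split; [exact Hp |]].
  - destruct (U_bounded_trans x Hx) as [t [S [[Ht Htr] [Hxt [HS HtS]]]]].
    destruct (union2_ex t p) as [t' [Ht' Ht'']].
    apply (U_of_subset_trans p t' S); auto.
    + split; [exact Ht' |]; intros y z Hy Hz; apply Ht''; apply Ht'' in Hy; left.
      destruct Hy as [Hy | Hy]; [eauto |].
      apply Hp' in Hy; destruct Hy as [_ Hy]; eauto.
    + intros z Hz; apply Ht''; auto.
    + intros a Ha Hat; apply Ht'' in Hat; destruct Hat as [Hat | Hat]; [auto |].
      apply Hp' in Hat; destruct Hat as [Hat _]; contradiction.
  - intros y Hy; rewrite Hp'; unfold isset; split; intros [H1 H2]; split; auto.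
    intros z Hz; apply H2; [exact (U_mem y z Hy Hz) | exact Hz].
Qed.

Lemma U_ax_infinity : ax_infinity M U mem ur.
Proof.
  destruct pure_inductive_ex as [H [o [HH [Hpure [Ho [Ho' [HoH Hsucc]]]]]]].
  destruct ideal_empty_ex as [e0 [He0 He0']].
  assert (UH : U H).
  { apply (U_of_subset_trans H H e0); auto; [apply HH |].
    intros a Ha HaH; destruct (Hpure a HaH Ha). }
  exists H; split; [exact UH | split; [apply HH | split]].
  - exists o; split; [exact (U_mem H o UH HoH) | split; [exact Ho | split; [auto | exact HoH]]].
  - intros x Hx HxH; destruct (adjoin_ex x x) as [s [Hs Hs']].
    assert (HsH : mem s H) by (apply (Hsucc x s HxH); split; auto).
    exists s; split; [exact (U_mem H s UH HsH) | split; [exact HsH | split; [exact Hs |]]].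
    intros z _; apply Hs'.
Qed.

Lemma U_ax_choice : ax_choice M U mem ur.
Proof.
  intros x Hx Hne Hdis; destruct ZF as [_ [_ [_ [_ [_ [_ [_ [_ [_ HC]]]]]]]]].
  destruct (HC x Logic.I) as [s [_ [_ Hs]]].
  { intros y _ Hy; destruct (Hne y (U_mem x y Hx Hy) Hy) as [H1 [z [_ Hz]]].
    split; [exact H1 | exists z; auto]. }
  { intros y y' _ _ Hy Hy' Hne' z _ Hz.
    exact (Hdis y y' (U_mem x y Hx Hy) (U_mem x y' Hx Hy') Hy Hy' Hne' z
             (U_mem y z (U_mem x y Hx Hy) Hz) Hz). }
  assert (DP : definable (fun e => exists y, mem y (e 1) /\ mem (e 0) y)) by solve_definable.
  destruct (separation _ DP (scons x (fun _ => x)) s) as [s2 [Hs2 Hs2']]; simpl in Hs2'.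
  exists s2; split; [| split; [exact Hs2 |]].
  - apply (U_of_subset_TC x); auto; intros z Hz; apply Hs2' in Hz.
    destruct Hz as [_ [y [Hy Hzy]]]; exact (in_TC_step x y z (in_TC_mem x y Hy) Hzy).
  - intros y Hy Hyx; destruct (Hs y Logic.I Hyx) as [c [_ [Hc1 [Hc2 Hc3]]]].
    exists c; split; [exact (U_mem y c Hy Hc1) | split; [exact Hc1 | split]].
    + apply Hs2'; split; [exact Hc2 | exists y; auto].
    + intros c' _ Hc'1 Hc'2; apply Hc3; [exact Logic.I | exact Hc'1 | apply Hs2' in Hc'2; tauto].
Qed.

Lemma U_A_proper_class : A_proper_class M U mem ur.
Proof.
  intros [s [Us [Ss Hs]]]; destruct Us as [k [[Hk Hk'] HIk]].
  apply (ideal_not_all k Hk); [| exact HIk]; intro z; rewrite Hk'; split; [tauto |].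
  intro Hz; split; [exact Hz |]; apply in_TC_mem, Hs; [exact (U_ur z Hz) | exact Hz].
Qed.

Section SwapInvariance.
Variables b c : M.
Hypotheses (ub : ur b) (uc : ur c).

Lemma U_swap x : U x -> U (swap b c x).
Proof.
  intros HU; pose proof (U_has_trans x HU) as HT.
  destruct (U_ker x HU) as [k [Hk Hxk]].
  destruct (TC_ex _ (swap_has_trans b c ub uc x HT)) as [s [Hs [Hps Hs']]].
  destruct (singleton_ex b) as [sb [Hsb Hsb']], (singleton_ex c) as [sc [Hsc Hsc']].
  destruct (ideal_union2_ex k sb Hk (ideal_singleton b sb ub Hsb Hsb')) as [k1 [Hk1 Hk1']].
  destruct (ideal_union2_ex k1 sc Hk1 (ideal_singleton c sc uc Hsc Hsc')) as [k2 [Hk2 Hk2']].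
  apply (U_intro _ s k2 Hs Hps Hk2); intros a Ha Has; apply Hs' in Has.
  destruct (swap_TC_ur b c ub uc x a HT Ha Has) as [z [Hz [Hzx Hsw]]].
  apply Hk2'; destruct Hsw as [[-> ->] | [[-> ->] | [_ [_ ->]]]].
  - right; apply Hsc'; reflexivity.
  - left; apply Hk1'; right; apply Hsb'; reflexivity.
  - left; apply Hk1'; left; exact (Hxk z Hz Hzx).
Qed.

Lemma sat_swap phi : forall e, (forall n, U (e n)) ->
  (sat M U mem ur (fun n => swap b c (e n)) phi <-> sat M U mem ur e phi).
Proof.
  assert (HT : forall (e : nat -> M) n, (forall n, U (e n)) -> has_trans (e n))
    by (intros e n He; exact (U_has_trans _ (He n))).
  assert (He' : forall (e : nat -> M) x, (forall n, U (e n)) -> U x -> forall n, U (scons x e n))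
    by (intros e x He Hx [|n]; simpl; auto).
  induction phi; intros e He; simpl.
  - split; intro H.
    + destruct (swap_mem_inv b c ub uc _ _ (HT e n0 He) H) as [y [Hy E]].
      rewrite (swap_inj b c ub uc _ y (HT e n He) (has_trans_mem _ y (HT e n0 He) Hy) E).
      exact Hy.
    + exact (swap_mem b c _ _ (HT e n0 He) H).
  - exact (swap_ur b c ub uc _ (HT e n He)).
  - split; intro H; [| rewrite H; reflexivity].
    exact (swap_inj b c ub uc _ _ (HT e n He) (HT e n0 He) H).
  - tauto.
  - rewrite IHphi1, IHphi2 by exact He; tauto.
  - rewrite IHphi1, IHphi2 by exact He; tauto.
  - rewrite IHphi1, IHphi2 by exact He; tauto.
  - split; intros H x Hx.
    + rewrite <- IHphi by (apply He'; auto); rewrite scons_map; apply H, U_swap, Hx.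
    + rewrite <- (swap_involutive b c ub uc x (U_has_trans x Hx)), <- scons_map, IHphi;
        [apply H, U_swap, Hx | apply He'; [exact He | apply U_swap, Hx]].
  - split; intros [x [Hx H]]; exists (swap b c x); split; try apply U_swap, Hx.
    + rewrite <- IHphi by (apply He'; [exact He | apply U_swap, Hx]); rewrite scons_map.
      rewrite (swap_involutive b c ub uc x (U_has_trans x Hx)); exact H.
    + rewrite <- scons_map, IHphi; [exact H | apply He'; auto].
Qed.

End SwapInvariance.

(* [U_params eI] is [U]; abstracting the parameters of the ideal makes membership in [U]
   definable uniformly in them. *)
Definition U_params (p : nat -> M) (x : M) : Prop :=
  exists k, is_ker M mem ur x k /\ sat M (fun _ => True) mem ur (scons k p) phiI.

Lemma definable_U_params i f : definable (fun e => U_params (fun m => e (f m)) (e i)).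
Proof.
  assert (Hker : definable (fun e => is_ker M mem ur (e (S i)) (e 0) /\
                   sat M (fun _ => True) mem ur (fun n => e (up_ren f n)) phiI))
    by (unfold is_ker; solve_definable).
  eapply definable_ext; [exact (definable_ex _ _ _ _ Hker) |].
  intro e; simpl; unfold U_params; setoid_rewrite scons_up_ren; reflexivity.
Qed.

Lemma definable_sat_U_params phi : forall f g,
  definable (fun e => sat M (U_params (fun m => e (f m))) mem ur (fun n => e (g n)) phi).
Proof.
  induction phi; intros f g; simpl.
  - apply definable_mem.
  - apply definable_ur.
  - apply definable_eq.
  - apply definable_False.
  - apply definable_imp; auto.
  - apply definable_and; auto.
  - apply definable_or; auto.
  - eapply definable_ext;
      [apply definable_all, definable_imp; [apply (definable_U_params 0 (fun m => S (f m))) |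
                                           apply (IHphi (fun m => S (f m)) (up_ren g))] |].
    intro e; simpl; setoid_rewrite scons_up_ren; reflexivity.
  - eapply definable_ext;
      [apply definable_ex, definable_and; [apply (definable_U_params 0 (fun m => S (f m))) |
                                           apply (IHphi (fun m => S (f m)) (up_ren g))] |].
    intro e; simpl; setoid_rewrite scons_up_ren; reflexivity.
Qed.

(* Positions of the ideal's parameters and of the formula's variables when the environment
   [interleave e eI] is preceded by one, resp. two, bound variables. *)
Definition param_index1 (m : nat) : nat := S (S (2 * m)).
Definition var_index1 (n : nat) : nat := match n with 0 => 0 | S n => S (2 * n) end.
Definition param_index2 (m : nat) : nat := S (S (S (2 * m))).
Definition var_index2 (n : nat) : nat :=
  match n with 0 => 0 | 1 => 1 | S (S n) => S (S (2 * n)) end.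

Lemma interleave_index1 (z : M) e p :
  (fun m => scons z (interleave e p) (param_index1 m)) = p /\
  (fun n => scons z (interleave e p) (var_index1 n)) = scons z e.
Proof.
  split; extensionality n; [exact (interleave_odd n e p) |].
  destruct n; [reflexivity | exact (interleave_even n e p)].
Qed.

Lemma interleave_index2 (v u : M) e p :
  (fun m => scons v (scons u (interleave e p)) (param_index2 m)) = p /\
  (fun n => scons v (scons u (interleave e p)) (var_index2 n)) = scons v (scons u e).
Proof.
  split; extensionality n; [exact (interleave_odd n e p) |].
  destruct n as [|[|n]]; [reflexivity | reflexivity | exact (interleave_even n e p)].
Qed.

Lemma U_ax_separation : ax_separation M U mem ur.
Proof.
  intros phi e He x Hx.
  destruct (separation _ (definable_sat_U_params phi param_index1 var_index1)
              (interleave e eI) x) as [y [Hy Hy']].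
  cbv beta in Hy'; setoid_rewrite (fun z => proj1 (interleave_index1 z e eI)) in Hy'.
  setoid_rewrite (fun z => proj2 (interleave_index1 z e eI)) in Hy'.
  exists y; split; [| split; [exact Hy | intros z _; apply Hy']].
  apply (U_of_subset_TC x); auto; intros z Hz; apply in_TC_mem, Hy', Hz.
Qed.

Lemma ideal_bound_env (e : nat -> M) : (forall n, U (e n)) -> forall N,
  exists K, I K /\ forall n, n < N -> forall a, ur a -> in_TC a (e n) -> mem a K.
Proof.
  intros He N; induction N as [| N [K [HK HK']]].
  - destruct ideal_empty_ex as [o [Ho _]]; exists o; split; [exact Ho | intros; lia].
  - destruct (U_ker (e N) (He N)) as [k [Hk Hek]].
    destruct (ideal_union2_ex K k HK Hk) as [K2 [HK2 HK2']].
    exists K2; split; [exact HK2 |]; intros n Hn a Ha Hin; apply HK2'.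
    assert (Hn' : n < N \/ n = N) by lia.
    destruct Hn' as [Hlt | ->]; [left; exact (HK' n Hlt a Ha Hin) | right; exact (Hek a Ha Hin)].
Qed.

Lemma unique_witness_kernel phi e u v K :
  (forall n, U (e n)) -> U u -> U v -> I K ->
  (forall a, ur a -> in_TC a u -> mem a K) ->
  (forall n, n < fv_bound phi -> forall a, ur a -> in_TC a (e n) -> mem a K) ->
  sat M U mem ur (scons v (scons u e)) phi ->
  (forall v', U v' -> sat M U mem ur (scons v' (scons u e)) phi -> v' = v) ->
  forall a, ur a -> in_TC a v -> mem a K.
Proof.
  intros He Uu Uv HK HuK HeK Hsat Huniq a Ha Hav; apply NNPP; intro HaK.
  destruct (U_ker v Uv) as [kv [Hkv Hvk]].
  destruct (ideal_union2_ex K kv HK Hkv) as [K2 [HK2 HK2']].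
  destruct (ideal_avoid K2 HK2) as [c [Hc HcK2]].
  assert (Hfix : forall y, U y -> (forall z, ur z -> in_TC z y -> mem z K) -> swap a c y = y).
  { intros y Uy Hy; apply (swap_fixed a c y (U_has_trans y Uy)); intros z Hz Hzy; split.
    - intros ->; exact (HaK (Hy a Hz Hzy)).
    - intros ->; apply HcK2, HK2'; left; exact (Hy c Hz Hzy). }
  assert (Henv : forall n, U (scons v (scons u e) n)) by (intros [|[|n]]; simpl; auto).
  pose proof (proj2 (sat_swap a c Ha Hc phi _ Henv) Hsat) as Hsat2.
  rewrite (sat_fv_ext _ _ _ _ phi _ (scons (swap a c v) (scons u e))) in Hsat2.
  2: { intros [|[|n]] Hn; simpl; [reflexivity | exact (Hfix u Uu HuK) |].
       apply Hfix; [exact (He n) | apply HeK; lia]. }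
  assert (Hpv : swap a c v = v) by exact (Huniq _ (U_swap a c Ha Hc v Uv) Hsat2).
  rewrite <- Hpv in Hav.
  destruct (swap_TC_ur a c Ha Hc v a (U_has_trans v Uv) Ha Hav) as [z [Hz [Hzv Hsw]]].
  destruct Hsw as [[-> Hac] | [[-> _] | [Hza [_ ->]]]].
  - apply HcK2, HK2'; right; rewrite <- Hac; exact (Hvk a Ha Hzv).
  - apply HcK2, HK2'; right; exact (Hvk c Hz Hzv).
  - exact (Hza eq_refl).
Qed.

Lemma U_ax_replacement : ax_replacement M U mem ur.
Proof.
  intros phi e He x Hx Hfun.
  assert (DR : definable (fun E => U_params (fun m => E (param_index2 m)) (E 0) /\
                 sat M (U_params (fun m => E (param_index2 m))) mem ur
                     (fun n => E (var_index2 n)) phi))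
    by (apply definable_and; [apply definable_U_params | apply definable_sat_U_params]).
  destruct (replacement _ DR (interleave e eI) x) as [Y [HY HY']].
  { intros u Hu; cbv beta.
    setoid_rewrite (fun v => proj1 (interleave_index2 v u e eI)).
    setoid_rewrite (fun v => proj2 (interleave_index2 v u e eI)).
    destruct (Hfun u (U_mem x u Hx Hu) Hu) as [v [Hv [Hs Huniq]]].
    exists v; split; [split; assumption |]; intros v' [Hv' Hs']; exact (Huniq v' Hv' Hs'). }
  cbv beta in HY'.
  setoid_rewrite (fun v u => proj1 (interleave_index2 v u e eI)) in HY'.
  setoid_rewrite (fun v u => proj2 (interleave_index2 v u e eI)) in HY'.
  destruct (ideal_bound_env e He (fv_bound phi)) as [K1 [HK1 HK1']].
  destruct (U_ker x Hx) as [kx [Hkx Hxk]].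
  destruct (ideal_union2_ex kx K1 Hkx HK1) as [K0 [HK0 HK0']].
  assert (HYU : forall v, mem v Y -> U v)
    by (intros v Hv; apply HY' in Hv; destruct Hv as [u [_ [Uv _]]]; exact Uv).
  assert (HYK : forall v, mem v Y -> forall a, ur a -> in_TC a v -> mem a K0).
  { intros v Hv; apply HY' in Hv; destruct Hv as [u [Hux [Uv Hsat]]].
    destruct (Hfun u (U_mem x u Hx Hux) Hux) as [v0 [_ [_ Hun]]].
    apply (unique_witness_kernel phi e u v K0 He (U_mem x u Hx Hux) Uv HK0).
    - intros a Ha Hau; apply HK0'; left; exact (Hxk a Ha (in_TC_mem_r a u x Hux Hau)).
    - intros n Hn a Ha Hin; apply HK0'; right; exact (HK1' n Hn a Ha Hin).
    - exact Hsat.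
    - intros v' Uv' Hs'; rewrite (Hun v' Uv' Hs'); symmetry; exact (Hun v Uv Hsat). }
  destruct (TC_union_ex Y (fun v Hv => U_has_trans v (HYU v Hv))) as [W [HW HW']].
  exists Y; split; [| split; [exact HY |]].
  - apply (U_of_subset_trans Y W K0 HW HY); [| exact HK0 |].
    + intros v Hv; apply HW'; exists v; split; [exact Hv | apply in_TC_refl].
    + intros a Ha HaW; apply HW' in HaW; destruct HaW as [v [Hv Hav]]; exact (HYK v Hv a Ha Hav).
  - intros v Uv; rewrite HY'; split.
    + intros [u [Hu [_ Hs]]]; exists u; split; [exact (U_mem x u Hx Hu) | auto].
    + intros [u [_ [Hu Hs]]]; exists u; split; [exact Hu | split; [exact Uv | exact Hs]].
Qed.

Lemma U_ZFCU_R : ZFCU_R M U mem ur.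
Proof.
  repeat split; [exact U_ax_urelements | exact U_ax_extensionality | exact U_ax_foundation
    | exact U_ax_pairing | exact U_ax_union | exact U_ax_powerset | exact U_ax_infinity
    | exact U_ax_separation | exact U_ax_replacement | exact U_ax_choice].
Qed.

End Ideal.

End Universe.

Theorem mainTheorem10 (M : Type) (mem : M -> M -> Prop) (ur : M -> Prop)
  (phiI : form) (eI : nat -> M) :
  ZFCU_R M (fun _ => True) mem ur ->
  is_A_ideal M mem ur (defined_class mem ur phiI eI) ->
  ZFCU_R M (U_ideal M mem ur (defined_class mem ur phiI eI)) mem ur /\
  A_proper_class M (U_ideal M mem ur (defined_class mem ur phiI eI)) mem ur.
Proof.
  intros ZF HI; split.
  - exact (U_ZFCU_R M mem ur ZF phiI eI HI).
  - exact (U_A_proper_class M mem ur ZF phiI eI HI).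
Qed.
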